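(* Let $\mathcal M=(Q,s_{in},s_T,s_F,\delta)$ be a Turing machine with input that never moves its input head outside the input tape. There is a closed term ${\tt trans}_{\mathcal M}$ and a constant $c$ (depending only on $\mathcal M$) such that for every term $k$ and every configuration $C$ with input tape string $i$ (with $0\le n<|i|$ for its input-head position $n$): (1) if $C$ is final, then ${\tt trans}_{\mathcal M}\,k\,\ulcorner C\urcorner\to_{det}^{m} k\,\ulcorner C\urcorner$ for some $m\le c\,|i|\log_2|i|$; (2) if $C\to_{\mathcal M} D$, then ${\tt trans}_{\mathcal M}\,k\,\ulcorner C\urcorner\to_{det}^{m} {\tt trans}_{\mathcal M}\,k\,\ulcorner D\urcorner$ for some $m\le c\,|i|\log_2|i|$.
   Context: Deterministic $\lambda$-calculus $\Lambda_{\tt det}$: terms $t ::= v \mid t\,v$, values $v ::= x\mid \lambda x.t$, evaluation contexts $E ::= [\cdot]\mid E\,v$, and $E[(\lambda x.t)v]\to_{det} E[t\{x:=v\}]$; $\to_{det}^m$ means exactly $m$ steps. Encodings: a character $a_j$ of an ordered alphabet $\Sigma=\{a_1<\dots<a_p\}$ is $\ulcorner a_j\urcorner:=\lambda x_1\ldots\lambda x_p.x_j$; strings over $\Sigma$ are $\ulcorner\varepsilon\urcorner:=\lambda x_1\ldots\lambda x_p.\lambda x_\varepsilon.x_\varepsilon$, $\ulcorner a_j r\urcorner:=\lambda x_1\ldots\lambda x_p.\lambda x_\varepsilon.x_j\ulcorner r\urcorner$. Reversed binary: $\mathrm{bin}(0)=\varepsilon$, for $n>0$ $\mathrm{bin}(n)=b_0\cdots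 b_\ell$ with $n=\sum_j b_j 2^j$, $b_\ell=1$, encoded as a string over $\{0<1\}$. Turing machines with input: $\mathbb B_I=\{0<1<\mathsf L<\mathsf R\}$, $\mathbb B_W=\{0<1<\Box\}$ ($\Box$ blank). A machine is $\mathcal M=(Q,s_{in},s_T,s_F,\delta)$ with finite ordered set of states $Q=\{s_1<\dots<s_m\}$, initial state $s_{in}$, final states $s_T,s_F$, and partial transition function $\delta:\mathbb B_I\times\mathbb B_W\times Q\rightharpoonup\{-1,+1,0\}\times\mathbb B_W\times\{\leftarrow,\rightarrow,\downarrow\}\times Q$, defined on $(b,a,s)$ only if $s\notin\{s_T,s_F\}$. A configuration is $(i,n\mid w_l,a,w_r\mid s)$ with $i=\mathsf L s'\mathsf R$, $s'\in\{0,1\}^*$, the read-only input tape string, $n\in\mathbb N$ the input-head position, $w_l,w_r\in\mathbb B_W^*$ the work tape to the left/right of the work head, $a\in\mathbb B_W$ the work-head cell, $s\in Q$; it is final if $s\in\{s_T,s_F\}$. Transition: let $b$ be the character of $i$ at position $n$ (counting from $0$) and $\delta(b,a,s)=(d\mid a',\mu\mid s')$. Then $C\to_{\mathcal M} D$ where $D$ has input position $n+d$, state $s'$, and work part: if $\mu=\downarrow$, $(w_l,a',w_r)$; if $\mu=\leftarrow$ and $w_l=w a''$, $(w,a'',a'w_r)$, and if $w_l=\varepsilon$, $(\varepsilon,\Box,a'w_r)$; if $\mu=\rightarrow$ and $w_r=a''w$, $(w_l a',a'',w)$, and if $w_r=\varepsilon$, $(w_la',\Box,\varepsilon)$. The input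 string $i$ is unchanged. The encoding of a configuration is $\ulcorner(i,n\mid w_l,a,w_r\mid s)\urcorner:=\lambda x.\,x\,\ulcorner i\urcorner\,\ulcorner\mathrm{bin}(n)\urcorner\,\ulcorner w_l^{R}\urcorner\,\ulcorner a\urcorner\,\ulcorner w_r\urcorner\,\ulcorner s\urcorner$, with $i$ encoded as a string over $\mathbb B_I$, $w_l^R$ (reversal of $w_l$) and $w_r$ as strings over $\mathbb B_W$, $a$ as a character of $\mathbb B_W$, $s$ as a character of $Q$. Note $|i|\ge 2$. *)

From Stdlib Require Import List Arith NArith Reals.
From mathcomp Require Import ssreflect ssrbool eqtype fintype.
Import ListNotations.

Inductive value : Type :=
| Var : nat -> value
| Lam : term -> value
with term : Type :=
| Val : value -> term
| App : term -> value -> term.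

Fixpoint liftV (c : nat) (w : value) : value :=
  match w with
  | Var n => if Nat.ltb n c then Var n else Var (S n)
  | Lam t => Lam (liftT (S c) t)
  end
with liftT (c : nat) (t : term) : term :=
  match t with
  | Val w => Val (liftV c w)
  | App t1 w => App (liftT c t1) (liftV c w)
  end.

(* capture-avoiding substitution of s for index j (and lowering of the
   indices above j, since the binder of j disappears) *)
Fixpoint substV (j : nat) (s : value) (w : value) : value :=
  match w with
  | Var n => if Nat.eqb n j then s
             else if Nat.ltb j n then Var (Nat.pred n) else Var n
  | Lam t => Lam (substT (S j) (liftV 0 s) t)
  end
with substT (j : nat) (s : value) (t : term) : term :=
  match t with
  | Val w => Val (substV j s w)
  | App t1 w => App (substT j s t1) (substV j s w)
  end.

Inductive step_det : term -> term -> Prop :=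
| step_beta (t : term) (v : value) :
    step_det (App (Val (Lam t)) v) (substT 0 v t)
| step_ctx (t t' : term) (v : value) :
    step_det t t' -> step_det (App t v) (App t' v).

Inductive nsteps : nat -> term -> term -> Prop :=
| nsteps0 (t : term) : nsteps 0 t t
| nstepsS (m : nat) (t u w : term) :
    step_det t u -> nsteps m u w -> nsteps (S m) t w.

Fixpoint boundV (d : nat) (w : value) : bool :=
  match w with
  | Var n => Nat.ltb n d
  | Lam t => boundT (S d) t
  end
with boundT (d : nat) (t : term) : bool :=
  match t with
  | Val w => boundV d w
  | App t1 w => boundT d t1 && boundV d w
  end.

Definition closedT (t : term) : Prop := boundT 0 t = true.

Fixpoint nlam (k : nat) (t : term) : term :=
  match k with
  | 0 => t
  | S k' => Val (Lam (nlam k' t))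
  end.

Definition lamsV (k : nat) (t : term) : value := Lam (nlam k t).

(* character with 0-based index j (i.e. a_{j+1}) of an alphabet of size p >= 1:
   \x_1 ... \x_p . x_{j+1}; x_{j+1} has de Bruijn index p-1-j *)
Definition enc_char (p j : nat) : value :=
  lamsV (p - 1) (Val (Var (p - 1 - j))).

(* strings over an alphabet of size p, characters given by 0-based indices:
   eps  = \x_1..\x_p.\x_eps. x_eps
   a_{j+1} r = \x_1..\x_p.\x_eps. x_{j+1} <r>   *)
Fixpoint enc_str (p : nat) (s : list nat) : value :=
  match s with
  | [] => lamsV p (Val (Var 0))
  | j :: r => lamsV p (App (Val (Var (p - j))) (enc_str p r))
  end.

(* reversed binary: least significant bit first, no trailing zeros, bin 0 = eps *)
Fixpoint bin_pos (q : positive) : list nat :=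
  match q with
  | xH => [1]
  | xO q' => 0 :: bin_pos q'
  | xI q' => 1 :: bin_pos q'
  end.

Definition bin (n : nat) : list nat :=
  match N.of_nat n with
  | N0 => []
  | Npos q => bin_pos q
  end.

Inductive bI : Type := I0 | I1 | IL | IR.
Definition bI_idx (b : bI) : nat :=
  match b with I0 => 0 | I1 => 1 | IL => 2 | IR => 3 end.

Inductive bW : Type := W0 | W1 | WB.
Definition bW_idx (a : bW) : nat :=
  match a with W0 => 0 | W1 => 1 | WB => 2 end.

Inductive in_dir : Type := Dm1 | Dp1 | D0.
Inductive w_dir : Type := WLeft | WRight | WStay.

(* Q = {s_1 < ... < s_m} is represented by 'I_m with its natural order *)
Record TM : Type := MkTM {
  tm_m : nat;
  tm_init : 'I_tm_m;
  tm_T : 'I_tm_m;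
  tm_F : 'I_tm_m;
  tm_delta : bI -> bW -> 'I_tm_m -> option (in_dir * bW * w_dir * 'I_tm_m)
}.

Definition tm_wf (M : TM) : Prop :=
  forall b a s, tm_delta M b a s <> None -> s <> tm_T M /\ s <> tm_F M.

Definition tm_stays_in (M : TM) : Prop :=
  forall a s d a' mu s',
    (tm_delta M IL a s = Some (d, a', mu, s') -> d <> Dm1) /\
    (tm_delta M IR a s = Some (d, a', mu, s') -> d <> Dp1).

Record config (m : nat) : Type := Config {
  c_in : list bI;
  c_pos : nat;
  c_wl : list bW;
  c_a : bW;
  c_wr : list bW;
  c_st : 'I_m
}.
Arguments Config {m}.
Arguments c_in {m}.
Arguments c_pos {m}.
Arguments c_wl {m}.
Arguments c_a {m}.
Arguments c_wr {m}.
Arguments c_st {m}.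

Definition valid_input (i : list bI) : Prop :=
  exists s' : list bI, (forall x, In x s' -> x = I0 \/ x = I1) /\ i = IL :: s' ++ [IR].

Definition is_final (M : TM) (C : config (tm_m M)) : Prop :=
  c_st C = tm_T M \/ c_st C = tm_F M.

Definition new_pos (d : in_dir) (n n' : nat) : Prop :=
  match d with
  | Dp1 => n' = S n
  | D0 => n' = n
  | Dm1 => n = S n'
  end.

Definition move_work (mu : w_dir) (wl : list bW) (a' : bW) (wr : list bW)
  : list bW * bW * list bW :=
  match mu with
  | WStay => (wl, a', wr)
  | WLeft => match rev wl with
             | [] => ([], WB, a' :: wr)
             | a'' :: w' => (rev w', a'', a' :: wr)
             end
  | WRight => match wr with
              | [] => (wl ++ [a'], WB, [])
              | a'' :: w => (wl ++ [a'], a'', w)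
              end
  end.

Definition tm_step (M : TM) (C D : config (tm_m M)) : Prop :=
  exists b d a' mu s',
    nth_error (c_in C) (c_pos C) = Some b /\
    tm_delta M b (c_a C) (c_st C) = Some (d, a', mu, s') /\
    c_in D = c_in C /\
    new_pos d (c_pos C) (c_pos D) /\
    (c_wl D, c_a D, c_wr D) = move_work mu (c_wl C) a' (c_wr C) /\
    c_st D = s'.

Definition enc_config {m : nat} (C : config m) : value :=
  Lam (App (App (App (App (App (App (Val (Var 0))
        (enc_str 4 (map bI_idx (c_in C))))
        (enc_str 2 (bin (c_pos C))))
        (enc_str 3 (map bW_idx (rev (c_wl C)))))
        (enc_char 3 (bW_idx (c_a C))))
        (enc_str 3 (map bW_idx (c_wr C))))
        (enc_char m (nat_of_ord (c_st C)))).

Definition log2R (x : R) : R := (ln x / ln 2)%R.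

(* The simulating term is a self-applied loop [A A] written in continuation-passing style.
   Given [k] and the encoding of C = (i, n | w_l, a, w_r | s), the state character s selects
   one branch per state.  A final state hands the configuration to [k].  Otherwise the branch
   reads the input symbol under the head by dropping n symbols from the encoding of i, by a
   recursion on the reversed binary numeral of n that costs O(2^|bin n|) = O(n) steps; it looks
   the transition up in a table indexed by the input and work symbols, increments or decrements
   the numeral, moves the work head in constant time (w_l is stored reversed), and re-enters
   [A A k] on the encoding of D.  A step therefore costs O(|Q| + |i|) beta-steps, which is below
   c |i| log2 |i| since |i| >= 2. *)

From Stdlib Require Import List Arith Lia NArith Reals Lra.
From Stdlib Require String.
Import (notations) String.
From mathcomp Require Import ssrbool fintype.
From mathcomp Require seq ssrnat.
Import ListNotations.

Scheme value_ind' := Induction for value Sort Prop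
  with term_ind' := Induction for term Sort Prop.
Combined Scheme value_term_ind from value_ind', term_ind'.

Notation closedV w := (boundV 0 w = true).

Lemma lift_bound :
  (forall w d c, boundV d w = true -> d <= c -> liftV c w = w) /\
  (forall t d c, boundT d t = true -> d <= c -> liftT c t = t).
Proof.
  apply value_term_ind; simpl; intros.
  - apply Nat.ltb_lt in H. destruct (Nat.ltb_spec n c); [reflexivity | lia].
  - f_equal. apply (H (S d)); auto; lia.
  - f_equal. eauto.
  - apply Bool.andb_true_iff in H1 as [? ?]. f_equal; eauto.
Qed.

Lemma subst_bound :
  (forall w d j s, boundV d w = true -> d <= j -> substV j s w = w) /\
  (forall t d j s, boundT d t = true -> d <= j -> substT j s t = t).
Proof.
  apply value_term_ind; simpl; intros.
  - apply Nat.ltb_lt in H. destruct (Nat.eqb_spec n j); [lia |].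
    destruct (Nat.ltb_spec j n); [lia | reflexivity].
  - f_equal. apply (H (S d)); auto; lia.
  - f_equal. eauto.
  - apply Bool.andb_true_iff in H1 as [? ?]. f_equal; eauto.
Qed.

Lemma subst_lift :
  (forall w c s, substV c s (liftV c w) = w) /\
  (forall t c s, substT c s (liftT c t) = t).
Proof.
  apply value_term_ind; simpl; intros; try (f_equal; auto).
  destruct (Nat.ltb_spec n c); cbn [substV].
  - destruct (Nat.eqb_spec n c); [lia |]. destruct (Nat.ltb_spec c n); [lia | auto].
  - destruct (Nat.eqb_spec (S n) c); [lia |]. destruct (Nat.ltb_spec c (S n)); [auto | lia].
Qed.

Lemma bound_mono :
  (forall w d d', boundV d w = true -> d <= d' -> boundV d' w = true) /\
  (forall t d d', boundT d t = true -> d <= d' -> boundT d' t = true).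
Proof.
  apply value_term_ind; simpl; intros.
  - apply Nat.ltb_lt in H. apply Nat.ltb_lt. lia.
  - apply (H (S d)); auto; lia.
  - eauto.
  - apply Bool.andb_true_iff in H1 as [? ?]. apply Bool.andb_true_iff; split; eauto.
Qed.

Lemma liftV_closed w c : closedV w -> liftV c w = w.
Proof. intro H. apply (proj1 lift_bound w 0); auto; lia. Qed.

Lemma substV_closed w j s : closedV w -> substV j s w = w.
Proof. intro H. apply (proj1 subst_bound w 0); auto; lia. Qed.

Lemma substV_liftV w c s : substV c s (liftV c w) = w.
Proof. apply (proj1 subst_lift). Qed.

Lemma boundV_closed w d : closedV w -> boundV d w = true.
Proof. intro H. apply (proj1 bound_mono w 0); auto; lia. Qed.

Lemma boundT_nlam n t d : boundT d (nlam n t) = boundT (n + d) t.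
Proof. revert d; induction n; intros; simpl; auto. rewrite IHn. f_equal. lia. Qed.

Lemma substT_nlam n j v t :
  closedV v -> substT j v (nlam n t) = nlam n (substT (n + j) v t).
Proof.
  intro Hv. revert j; induction n; intros; simpl; auto.
  rewrite liftV_closed, IHn, <- plus_n_Sm; auto.
Qed.

Lemma enc_str_closed p s : closedV (enc_str p s).
Proof.
  induction s; simpl; unfold lamsV; simpl; rewrite boundT_nlam; simpl.
  - apply Nat.ltb_lt. lia.
  - rewrite boundV_closed, Bool.andb_true_r; auto. apply Nat.ltb_lt. lia.
Qed.

Lemma enc_char_closed p j : 0 < p -> closedV (enc_char p j).
Proof.
  intro H. unfold enc_char, lamsV. simpl. rewrite boundT_nlam. simpl.
  apply Nat.ltb_lt. lia.
Qed.

Definition red (t u : term) (b : nat) : Prop := exists m, nsteps m t u /\ m <= b.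

Lemma nsteps_trans m1 m2 t u w :
  nsteps m1 t u -> nsteps m2 u w -> nsteps (m1 + m2) t w.
Proof. induction 1; simpl; intros; auto. econstructor; eauto. Qed.

Lemma nsteps_app m t u v : nsteps m t u -> nsteps m (App t v) (App u v).
Proof. induction 1; econstructor; eauto. constructor; auto. Qed.

Lemma red_refl t : red t t 0.
Proof. exists 0; split; [constructor | lia]. Qed.

Lemma red_step t t' u b : step_det t t' -> red t' u b -> red t u (S b).
Proof. intros H [m [H1 H2]]. exists (S m); split; [econstructor; eauto | lia]. Qed.

Lemma red_trans t u w b1 b2 : red t u b1 -> red u w b2 -> red t w (b1 + b2).
Proof.
  intros [m1 [H1 ?]] [m2 [H2 ?]].
  exists (m1 + m2); split; [eapply nsteps_trans; eauto | lia].
Qed.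

Lemma red_mono t u b b' : red t u b -> b <= b' -> red t u b'.
Proof. intros [m [H1 H2]] H. exists m; split; auto; lia. Qed.

Lemma red_app t u v b : red t u b -> red (App t v) (App u v) b.
Proof. intros [m [H1 H2]]. exists m; split; auto. apply nsteps_app; auto. Qed.

Lemma red_eq t u u' b : u = u' -> red t u b -> red t u' b.
Proof. intros ->; auto. Qed.

Fixpoint apps (t : term) (l : list value) : term :=
  match l with [] => t | v :: l' => apps (App t v) l' end.

Lemma red_apps t t' l b : red t t' b -> red (apps t l) (apps t' l) b.
Proof. revert t t'; induction l; intros; simpl; auto. apply IHl, red_app; auto. Qed.

Lemma red_step_apps t t' l u b :
  step_det t t' -> red (apps t' l) u b -> red (apps t l) u (S b).
Proof.
  intros H1 H2. apply (red_trans _ (apps t' l) _ 1 b); [| exact H2].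
  apply red_apps. eapply red_step; [exact H1 | apply red_refl].
Qed.

Lemma substT_apps j s t l :
  substT j s (apps t l) = apps (substT j s t) (map (substV j s) l).
Proof. revert t; induction l; intros; simpl; [reflexivity | apply IHl]. Qed.

Lemma map_substV_closed j s l : Forall (fun v => closedV v) l -> map (substV j s) l = l.
Proof. induction 1; simpl; auto. rewrite substV_closed; congruence. Qed.

Lemma boundT_apps d t l : boundT d (apps t l) = andb (boundT d t) (forallb (boundV d) l).
Proof.
  revert t; induction l; intros; simpl; [now rewrite Bool.andb_true_r |].
  rewrite IHl. simpl. now rewrite Bool.andb_assoc.
Qed.

Definition id_lam : value := Lam (Val (Var 0)).

Lemma nlam_const_spec n w vs :
  length vs = n -> Forall (fun v => closedV v) vs -> closedV w ->
  red (apps (nlam n (Val w)) vs) (Val w) n.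
Proof.
  revert vs; induction n; intros vs Hl Hf Hw.
  - destruct vs; simpl in *; try discriminate. apply red_refl.
  - destruct vs as [|v vs]; simpl in *; try discriminate. inversion Hf; subst.
    apply red_step_apps with (t' := substT 0 v (nlam n (Val w))); [apply step_beta |].
    rewrite substT_nlam by auto. simpl. rewrite substV_closed by auto.
    apply IHn; auto.
Qed.

Lemma nlam_var_select n x vs :
  length vs = S n -> Forall (fun v => closedV v) vs -> x <= n ->
  red (apps (Val (Lam (nlam n (Val (Var x))))) vs) (Val (nth (n - x) vs id_lam)) (S n).
Proof.
  revert x vs; induction n; intros x vs Hl Hf Hx.
  - destruct vs as [|v [|]]; simpl in *; try discriminate. inversion Hf; subst.
    replace x with 0 by lia. eapply red_step; [apply step_beta | apply red_refl].
  - destruct vs as [|v vs]; simpl in Hl; try discriminate. inversion Hf; subst. simpl apps.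
    apply red_step_apps with (t' := substT 0 v (nlam (S n) (Val (Var x)))); [apply step_beta |].
    rewrite substT_nlam by auto. cbn [substT substV]. rewrite Nat.add_0_r.
    destruct (Nat.eqb_spec x (S n)).
    + subst. rewrite Nat.sub_diag. eapply red_mono; [apply nlam_const_spec; auto | lia].
    + destruct (Nat.ltb_spec (S n) x); [lia |].
      replace (S n - x) with (S (n - x)) by lia. apply IHn; auto. lia.
Qed.

Lemma enc_char_select p j vs :
  length vs = p -> Forall (fun v => closedV v) vs -> j < p ->
  red (apps (Val (enc_char p j)) vs) (Val (nth j vs id_lam)) p.
Proof.
  intros Hl Hf Hj. destruct p as [|p]; [lia |]. unfold enc_char, lamsV.
  replace (S p - 1) with p by lia. replace j with (p - (p - j)) at 2 by lia.
  apply nlam_var_select; auto; lia.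
Qed.

Inductive nterm :=
| V (x : String.string)
| L (x : String.string) (b : nterm)
| Ap (f a : nterm)
| K (v : value).

(* Unbound names, and applications in argument position, compile to the junk index 1000;
   every combinator below is checked closed, so neither occurs. *)
Fixpoint idx (x : String.string) (ctx : list String.string) : nat :=
  match ctx with
  | [] => 1000
  | y :: c => if String.eqb x y then 0 else S (idx x c)
  end.

Fixpoint compT (ctx : list String.string) (e : nterm) {struct e} : term :=
  match e with
  | V x => Val (Var (idx x ctx))
  | L x b => Val (Lam (compT (x :: ctx) b))
  | Ap f a => App (compT ctx f) (compV ctx a)
  | K v => Val v
  end
with compV (ctx : list String.string) (e : nterm) {struct e} : value :=
  match e with
  | V x => Var (idx x ctx)
  | L x b => Lam (compT (x :: ctx) b)
  | K v => v
  | Ap _ _ => Var 1000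
  end.

Definition lams (xs : list String.string) (b : nterm) : nterm := fold_right L b xs.
Definition aps (f : nterm) (xs : list nterm) : nterm := fold_left Ap xs f.

Create HintDb closed discriminated.
#[local] Hint Constants Opaque : closed.
#[local] Hint Resolve enc_str_closed : closed.
#[local] Hint Extern 1 (boundV 0 (enc_char _ _) = true) => apply enc_char_closed; lia : closed.

Ltac solve_closed := first [assumption | reflexivity | solve [auto with closed]].

Ltac drop_closed_substs :=
  repeat (rewrite ?substV_liftV; match goal with
  | |- context [liftV ?c ?w] => rewrite (liftV_closed w c) by solve_closed
  | |- context [substV ?j ?s ?w] => rewrite (substV_closed w j s) by solve_closed
  end).

Ltac find_redex := match goal with
  | |- step_det (App (Val _) _) _ => apply step_beta
  | |- step_det (App _ _) _ => apply step_ctx; find_redex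
  end.

Ltac beta_step :=
  cbn [enc_str enc_char lamsV nlam Nat.sub map bW_idx bI_idx]; eapply red_step; [find_redex |
  cbn [substT substV liftT liftV Nat.eqb Nat.ltb Nat.leb Nat.pred nlam lamsV Nat.sub];
  drop_closed_substs].

Ltac eval_to_target := first [apply red_refl | beta_step; eval_to_target].

Ltac prove_closed :=
  cbn [boundV boundT Nat.ltb Nat.leb andb nlam lamsV Nat.sub];
  repeat match goal with
  | |- context [boundV ?d ?x] => rewrite (boundV_closed x d) by solve_closed
  end; cbn [andb]; reflexivity.

Lemma Forall_skipn {A} (P : A -> Prop) n l : Forall P l -> Forall P (skipn n l).
Proof. revert l; induction n; intros l H; simpl; auto. destruct H; simpl; auto. Qed.

Lemma Forall_tl {A} (P : A -> Prop) l : Forall P l -> Forall P (tl l).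
Proof. destruct 1; simpl; auto. Qed.

Create HintDb symbols discriminated.
#[local] Hint Constants Opaque : symbols.
#[local] Hint Resolve Forall_skipn Forall_tl : symbols.

Ltac side_condition := first [solve [eauto with symbols] | prove_closed].

(* Reduce until the head is an instance of the specification [H]. *)
Ltac eval_with H :=
  first [eapply red_trans; [eapply H; side_condition |] | beta_step; eval_with H].

(** * Reversed binary numerals *)

Fixpoint bits_succ (l : list nat) : list nat :=
  match l with
  | [] => [1]
  | 0 :: r => 1 :: r
  | _ :: r => 0 :: bits_succ r
  end.

Fixpoint bits_pred (l : list nat) : list nat :=
  match l with
  | [] => []
  | 0 :: r => 1 :: bits_pred r
  | _ :: [] => []
  | _ :: r => 0 :: r
  end.

Fixpoint bits_val (l : list nat) : nat :=
  match l with [] => 0 | b :: r => b + 2 * bits_val r end.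

Lemma bin_pos_succ q : bin_pos (Pos.succ q) = bits_succ (bin_pos q).
Proof. induction q; simpl; auto. rewrite IHq; auto. Qed.

Lemma bin_succ n : bin (S n) = bits_succ (bin n).
Proof.
  unfold bin. rewrite Nat2N.inj_succ. destruct (N.of_nat n); simpl; auto.
  apply bin_pos_succ.
Qed.

Lemma bits_pred_succ_bin_pos q : bits_pred (bits_succ (bin_pos q)) = bin_pos q.
Proof.
  induction q; simpl; auto.
  - rewrite IHq. reflexivity.
  - destruct (bin_pos q) eqn:E; [destruct q; discriminate | reflexivity].
Qed.

Lemma bin_pred n : bin n = bits_pred (bin (S n)).
Proof.
  rewrite bin_succ. unfold bin. destruct (N.of_nat n); [reflexivity |].
  now rewrite bits_pred_succ_bin_pos.
Qed.

Lemma bin_bits n : Forall (fun b => b <= 1) (bin n).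
Proof.
  assert (H : forall q, Forall (fun b => b <= 1) (bin_pos q)) by (induction q; simpl; auto).
  unfold bin. destruct (N.of_nat n); auto.
Qed.

Lemma bits_val_bin n : bits_val (bin n) = n.
Proof.
  assert (H : forall q, bits_val (bin_pos q) = Pos.to_nat q)
    by (induction q; simpl; rewrite ?IHq; lia).
  unfold bin. destruct (N.of_nat n) eqn:E; simpl.
  - destruct n; [auto | discriminate].
  - rewrite H, <- (Nat2N.id n), E. reflexivity.
Qed.

Lemma bin_length_bound n : length (bin n) <= n /\ 2 ^ length (bin n) <= 2 * n + 1.
Proof.
  assert (H : forall q, length (bin_pos q) <= Pos.to_nat q /\
                        2 ^ length (bin_pos q) <= 2 * Pos.to_nat q).
  { induction q as [q IH | q IH |]; cbn [bin_pos length]; [| | simpl; lia];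
      rewrite ?Pos2Nat.inj_xI, ?Pos2Nat.inj_xO, Nat.pow_succ_r'; pose proof (Pos2Nat.is_pos q); lia. }
  unfold bin. destruct (N.of_nat n) eqn:E; simpl; [lia |].
  pose proof (H p). assert (Pos.to_nat p = n) by (rewrite <- (Nat2N.id n), E; reflexivity). lia.
Qed.

#[local] Hint Resolve bin_bits : symbols.

(** * Combinators on binary numerals and strings *)

Local Open Scope string_scope.

Definition bin_nil := lams ["z0"; "z1"; "ze"] (V "ze").
Definition bin_zero r := lams ["z0"; "z1"; "ze"] (Ap (V "z0") r).
Definition bin_one r := lams ["z0"; "z1"; "ze"] (Ap (V "z1") r).
Definition work_nil := lams ["w0"; "w1"; "w2"; "we"] (V "we").
Definition work_var (j : nat) := V (match j with 0 => "w0" | 1 => "w1" | _ => "w2" end).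
Definition work_cons (j : nat) r := lams ["w0"; "w1"; "w2"; "we"] (Ap (work_var j) r).
Definition work_char (j : nat) := lams ["w0"; "w1"; "w2"] (work_var j).

(* Recursive combinators take themselves as first argument and are called as [f f]. *)
Definition succ_lam : value := Eval vm_compute in compV [] (
  lams ["self"; "n"; "k"] (aps (V "n") [
    L "r" (lams ["self"; "k"] (Ap (V "k") (bin_one (V "r"))));
    L "r" (lams ["self"; "k"]
      (aps (V "self") [V "self"; V "r"; L "r'" (Ap (V "k") (bin_zero (V "r'")))]));
    lams ["self"; "k"] (Ap (V "k") (bin_one bin_nil)); V "self"; V "k"])).

Definition pred_lam : value := Eval vm_compute in compV [] (
  lams ["self"; "n"; "k"] (aps (V "n") [
    L "r" (lams ["self"; "k"]
      (aps (V "self") [V "self"; V "r"; L "r'" (Ap (V "k") (bin_one (V "r'")))]));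
    L "r" (lams ["self"; "k"] (aps (V "r") [
      L "q" (lams ["k"; "r"] (Ap (V "k") (bin_zero (V "r"))));
      L "q" (lams ["k"; "r"] (Ap (V "k") (bin_zero (V "r"))));
      lams ["k"; "r"] (Ap (V "k") bin_nil); V "k"; V "r"]));
    lams ["self"; "k"] (Ap (V "k") bin_nil); V "self"; V "k"])).

Definition tail_lam : value := Eval vm_compute in compV [] (
  let cons_case := L "r" (lams ["k"; "l"] (Ap (V "k") (V "r"))) in
  lams ["l"; "k"] (aps (V "l") [cons_case; cons_case; cons_case; cons_case;
    lams ["k"; "l"] (Ap (V "k") (V "l")); V "k"; V "l"])).

(* [drop (b :: r) l] drops [val r] symbols twice, and one more if [b = 1]. *)
Definition drop_lam : value := Eval cbv -[tail_lam] in compV [] (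
  lams ["self"; "n"; "l"; "k"] (aps (V "n") [
    L "r" (lams ["self"; "l"; "k"] (aps (V "self") [V "self"; V "r"; V "l";
      L "l1" (aps (V "self") [V "self"; V "r"; V "l1"; V "k"])]));
    L "r" (lams ["self"; "l"; "k"] (aps (K tail_lam) [V "l";
      L "l0" (aps (V "self") [V "self"; V "r"; V "l0";
        L "l1" (aps (V "self") [V "self"; V "r"; V "l1"; V "k"])])]));
    lams ["self"; "l"; "k"] (Ap (V "k") (V "l")); V "self"; V "l"; V "k"])).

Definition self_apply (f : value) : value := Eval vm_compute in compV [] (
  lams ["n"; "k"] (aps (K f) [K f; V "n"; V "k"])).

Notation enc_pos n := (enc_str 2 (bin n)).
Notation enc_input l := (enc_str 4 (map bI_idx l)).
Notation enc_work l := (enc_str 3 (map bW_idx l)).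

Lemma succ_lam_spec bits kk :
  Forall (fun b => b <= 1) bits -> closedV kk ->
  red (App (App (App (Val succ_lam) succ_lam) (enc_str 2 bits)) kk)
      (App (Val kk) (enc_str 2 (bits_succ bits))) (20 * (length bits + 1)).
Proof.
  intros Hb; revert kk; induction Hb as [|b bits Hb1 Hb IH]; intros kk Hk.
  - eapply red_mono; [eval_to_target | lia].
  - destruct b as [|[|b]]; [| | lia].
    + eapply red_mono; [eval_to_target | simpl; lia].
    + eapply red_mono; [eval_with IH; eval_to_target | simpl; lia].
Qed.

Lemma pred_lam_spec bits kk :
  Forall (fun b => b <= 1) bits -> closedV kk ->
  red (App (App (App (Val pred_lam) pred_lam) (enc_str 2 bits)) kk)
      (App (Val kk) (enc_str 2 (bits_pred bits))) (30 * (length bits + 1)).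
Proof.
  intros Hb; revert kk; induction Hb as [|b bits Hb1 Hb IH]; intros kk Hk.
  - eapply red_mono; [eval_to_target | lia].
  - destruct b as [|[|b]]; [| | lia].
    + eapply red_mono; [eval_with IH; eval_to_target | simpl; lia].
    + destruct Hb as [|c r Hc Hr].
      * eapply red_mono; [eval_to_target | simpl; lia].
      * destruct c as [|[|c]]; [| | lia]; (eapply red_mono; [eval_to_target | simpl; lia]).
Qed.

Lemma tail_lam_spec l kk :
  Forall (fun b => b <= 3) l -> closedV kk ->
  red (App (App (Val tail_lam) (enc_str 4 l)) kk) (App (Val kk) (enc_str 4 (tl l))) 10.
Proof.
  intros Hl Hk. destruct Hl as [|x l Hx Hl].
  - eapply red_mono; [eval_to_target | lia].
  - destruct x as [|[|[|[|x]]]]; try lia; (eapply red_mono; [eval_to_target | lia]).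
Qed.

(* The budget is exponential in the length of the numeral, i.e. linear in its value. *)
Lemma drop_lam_spec bits l kk :
  Forall (fun b => b <= 1) bits -> Forall (fun b => b <= 3) l -> closedV kk ->
  red (App (App (App (App (Val drop_lam) drop_lam) (enc_str 2 bits)) (enc_str 4 l)) kk)
      (App (Val kk) (enc_str 4 (skipn (bits_val bits) l))) (60 * 2 ^ length bits - 30).
Proof.
  intros Hb; revert l kk; induction Hb as [|b bits Hb1 Hb IH]; intros l kk Hl Hk.
  - eapply red_mono; [unfold drop_lam; eval_to_target | simpl; lia].
  - assert (P := Nat.pow_nonzero 2 (length bits)).
    simpl length. rewrite Nat.pow_succ_r'.
    destruct b as [|[|b]]; [| | lia]; unfold drop_lam at 1; eapply red_mono.
    + eval_with IH. eval_with IH.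
      eapply red_eq; [| eval_to_target]. simpl bits_val.
      rewrite skipn_skipn. repeat f_equal. lia.
    + lia.
    + eval_with tail_lam_spec. eval_with IH. eval_with IH.
      eapply red_eq; [| eval_to_target]. simpl bits_val.
      replace (tl l) with (skipn 1 l) by (destruct l; reflexivity).
      rewrite !skipn_skipn. repeat f_equal. lia.
    + lia.
Qed.

Definition pass_lam : value := Eval vm_compute in compV [] (lams ["n"; "k"] (Ap (V "k") (V "n"))).

Definition pos_lam (d : in_dir) : value :=
  match d with
  | Dp1 => self_apply succ_lam
  | Dm1 => self_apply pred_lam
  | D0 => pass_lam
  end.

Lemma pos_lam_spec d n n' kk :
  new_pos d n n' -> closedV kk ->
  red (App (App (Val (pos_lam d)) (enc_pos n)) kk) (App (Val kk) (enc_pos n')) (30 * n + 40).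
Proof.
  intros Hd Hk. pose proof (bin_length_bound n) as [Hl _].
  destruct d; simpl in Hd; subst; eapply red_mono.
  - unfold self_apply. eval_with pred_lam_spec.
    eapply red_eq; [| eval_to_target]. now rewrite <- bin_pred.
  - lia.
  - unfold self_apply. eval_with succ_lam_spec.
    eapply red_eq; [| eval_to_target]. now rewrite <- bin_succ.
  - lia.
  - eval_to_target.
  - lia.
Qed.

(** * Combinators for one machine step *)

Definition cons_lam : value := Eval vm_compute in compV [] (
  let case j := lams ["r"; "k"] (Ap (V "k") (work_cons j (V "r"))) in
  lams ["a"; "r"; "k"] (aps (V "a") [case 0; case 1; case 2; V "r"; V "k"])).

Definition stay_lam : value := Eval vm_compute in compV [] (
  lams ["a"; "wl"; "wr"; "k"] (aps (V "k") [V "wl"; V "a"; V "wr"])).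

Definition left_lam : value := Eval cbv -[cons_lam] in compV [] (
  let case j := L "r" (lams ["k"; "wr'"] (aps (V "k") [V "r"; work_char j; V "wr'"])) in
  lams ["a"; "wl"; "wr"; "k"] (aps (K cons_lam) [V "a"; V "wr"; L "wr'" (aps (V "wl")
    [case 0; case 1; case 2; lams ["k"; "wr'"] (aps (V "k") [work_nil; work_char 2; V "wr'"]);
     V "k"; V "wr'"])])).

Definition right_lam : value := Eval cbv -[cons_lam] in compV [] (
  let case j := L "r" (lams ["k"; "wl'"] (aps (V "k") [V "wl'"; work_char j; V "r"])) in
  lams ["a"; "wl"; "wr"; "k"] (aps (K cons_lam) [V "a"; V "wl"; L "wl'" (aps (V "wr")
    [case 0; case 1; case 2; lams ["k"; "wl'"] (aps (V "k") [V "wl'"; work_char 2; work_nil]);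
     V "k"; V "wl'"])])).

Definition move_lam (mu : w_dir) : value :=
  match mu with WLeft => left_lam | WRight => right_lam | WStay => stay_lam end.

Lemma move_lam_spec mu wl a' wr kk wl2 a2 wr2 :
  closedV kk -> move_work mu wl a' wr = (wl2, a2, wr2) ->
  red (App (App (App (App (Val (move_lam mu)) (enc_char 3 (bW_idx a'))) (enc_work (rev wl)))
        (enc_work wr)) kk)
      (App (App (App (Val kk) (enc_work (rev wl2))) (enc_char 3 (bW_idx a2))) (enc_work wr2)) 40.
Proof.
  intros Hk E. destruct mu; simpl in E.
  - destruct (rev wl) as [|x w] eqn:Ew; injection E as <- <- <-.
    + destruct a'; (eapply red_mono; [unfold left_lam; eval_to_target | lia]).
    + rewrite rev_involutive.
      destruct a', x; (eapply red_mono; [unfold left_lam; eval_to_target | lia]).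
  - destruct wr as [|x w]; injection E as <- <- <-; rewrite rev_app_distr; simpl rev.
    + destruct a'; (eapply red_mono; [unfold right_lam; eval_to_target | lia]).
    + destruct a', x; (eapply red_mono; [unfold right_lam; eval_to_target | lia]).
  - injection E as <- <- <-. eapply red_mono; [unfold stay_lam; eval_to_target | lia].
Qed.

Definition cfg (i n wl a wr s : value) : value :=
  Lam (App (App (App (App (App (App (Val (Var 0)) i) n) wl) a) wr) s).

Definition resume_lam (c : value) : value :=
  Lam (Val (Lam (App (App (App (Val (Var 1)) (Var 1)) (Var 0)) c))).

Definition update_lam (pos move a s : value) : value := Eval vm_compute in compV [] (
  lams ["i"; "n"; "wl"; "wr"] (aps (K pos) [V "n"; L "n'" (aps (K move) [K a; V "wl"; V "wr";
    lams ["wl'"; "a'"; "wr'"] (lams ["self"; "k"] (aps (V "self") [V "self"; V "k";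
      L "x" (aps (V "x") [V "i"; V "n'"; V "wl'"; V "a'"; V "wr'"; K s])]))])])).

Definition row_lam (e0 e1 e2 : value) : value := Eval vm_compute in compV [] (
  L "r" (L "a" (aps (V "a") [K e0; K e1; K e2]))).

(* The empty-suffix branch [id_lam] of the input lookup is never taken: the head is on the tape. *)
Definition run_lam (t0 t1 t2 t3 : value) : value := Eval cbv -[drop_lam id_lam] in compV [] (
  lams ["i"; "n"; "wl"; "a"; "wr"; "s"] (aps (K drop_lam) [K drop_lam; V "n"; V "i";
    L "suf" (aps (V "suf") [K t0; K t1; K t2; K t3; K id_lam;
      V "a"; V "i"; V "n"; V "wl"; V "wr"])])).

Definition halt_lam : value := Eval vm_compute in compV [] (
  lams ["i"; "n"; "wl"; "a"; "wr"; "s"] (lams ["self"; "k"] (Ap (V "k")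
    (L "x" (aps (V "x") [V "i"; V "n"; V "wl"; V "a"; V "wr"; V "s"]))))).

Definition branches_lam (brs : list value) : value := Lam (apps (Val (Var 0)) brs).

Definition dispatch_lam (brs : value) : value := Eval vm_compute in compV [] (
  lams ["i"; "n"; "wl"; "a"; "wr"; "s"]
    (aps (K brs) [V "s"; V "i"; V "n"; V "wl"; V "a"; V "wr"; V "s"])).

Definition loop_lam (dispatch : value) : value := Eval vm_compute in compV [] (
  lams ["self"; "k"; "c"] (aps (V "c") [K dispatch; V "self"; V "k"])).

Lemma pos_lam_closed d : closedV (pos_lam d).
Proof. destruct d; reflexivity. Qed.

Lemma move_lam_closed mu : closedV (move_lam mu).
Proof. destruct mu; reflexivity. Qed.

Lemma row_lam_closed e0 e1 e2 : closedV e0 -> closedV e1 -> closedV e2 -> closedV (row_lam e0 e1 e2).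
Proof. intros. unfold row_lam. prove_closed. Qed.

Lemma update_lam_closed pos move a s :
  closedV pos -> closedV move -> closedV a -> closedV s -> closedV (update_lam pos move a s).
Proof. intros. unfold update_lam. prove_closed. Qed.

Lemma run_lam_closed t0 t1 t2 t3 :
  closedV t0 -> closedV t1 -> closedV t2 -> closedV t3 -> closedV (run_lam t0 t1 t2 t3).
Proof. intros. unfold run_lam. prove_closed. Qed.

#[local] Hint Resolve pos_lam_closed move_lam_closed row_lam_closed update_lam_closed
  run_lam_closed : closed.

Lemma Forall_bI_idx l : Forall (fun b => b <= 3) (map bI_idx l).
Proof. induction l as [|x l IH]; simpl; constructor; auto. destruct x; simpl; lia. Qed.

#[local] Hint Resolve Forall_bI_idx : symbols.

Lemma update_lam_spec d mu a' s i n n' wl wr wl2 a2 wr2 :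
  closedV s -> closedV i -> new_pos d n n' -> move_work mu wl a' wr = (wl2, a2, wr2) ->
  red (App (App (App (App (Val (update_lam (pos_lam d) (move_lam mu) (enc_char 3 (bW_idx a')) s))
         i) (enc_pos n)) (enc_work (rev wl))) (enc_work wr))
      (Val (resume_lam (cfg i (enc_pos n') (enc_work (rev wl2)) (enc_char 3 (bW_idx a2))
         (enc_work wr2) s)))
      (30 * n + 100).
Proof.
  intros Hs Hi Hd Hm. eapply red_mono.
  - unfold update_lam. eval_with pos_lam_spec. eval_with move_lam_spec. eval_to_target.
  - lia.
Qed.

Lemma nth_error_skipn {A} (l : list A) n b :
  nth_error l n = Some b -> exists r, skipn n l = b :: r.
Proof.
  revert l; induction n; intros [|x l] H; simpl in *; try discriminate.
  - inversion H; subst; eauto.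
  - eauto.
Qed.

Lemma skipn_map {A B} (f : A -> B) n l : skipn n (map f l) = map f (skipn n l).
Proof. revert l; induction n; intros [|x l]; simpl; auto. Qed.

Lemma run_lam_spec (e : bI -> bW -> value) il n wl a wr s b :
  (forall b a, closedV (e b a)) -> closedV s -> nth_error il n = Some b ->
  red (App (App (App (App (App (App (Val (run_lam
        (row_lam (e I0 W0) (e I0 W1) (e I0 WB)) (row_lam (e I1 W0) (e I1 W1) (e I1 WB))
        (row_lam (e IL W0) (e IL W1) (e IL WB)) (row_lam (e IR W0) (e IR W1) (e IR WB))))
        (enc_input il)) (enc_pos n)) (enc_work (rev wl))) (enc_char 3 (bW_idx a)))
        (enc_work wr)) s)
      (App (App (App (App (Val (e b a)) (enc_input il)) (enc_pos n)) (enc_work (rev wl)))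
        (enc_work wr))
      (60 * 2 ^ length (bin n) + 30).
Proof.
  intros He Hs Hn.
  pose proof (He I0 W0). pose proof (He I0 W1). pose proof (He I0 WB).
  pose proof (He I1 W0). pose proof (He I1 W1). pose proof (He I1 WB).
  pose proof (He IL W0). pose proof (He IL W1). pose proof (He IL WB).
  pose proof (He IR W0). pose proof (He IR W1). pose proof (He IR WB).
  destruct (nth_error_skipn _ _ _ Hn) as [r Hr].
  assert (P := Nat.pow_nonzero 2 (length (bin n))).
  eapply red_mono.
  - unfold run_lam. eval_with drop_lam_spec.
    rewrite bits_val_bin, skipn_map, Hr. simpl map. destruct b, a; eval_to_target.
  - lia.
Qed.

Lemma halt_lam_spec A i n wl a wr s k :
  closedV A -> closedV i -> closedV n -> closedV wl -> closedV a -> closedV wr -> closedV s ->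
  red (App (App (apps (Val halt_lam) [i; n; wl; a; wr; s]) A) k)
      (App (Val k) (cfg i n wl a wr s)) 8.
Proof. intros. simpl apps. unfold cfg. eval_to_target. Qed.

Lemma resume_lam_spec A c k :
  closedV A -> closedV c -> red (App (App (Val (resume_lam c)) A) k) (App (App (App (Val A) A) k) c) 2.
Proof. intros. unfold resume_lam. eval_to_target. Qed.

Lemma loop_lam_spec dispatch i n wl a wr s k :
  closedV dispatch -> closedV i -> closedV n -> closedV wl -> closedV a -> closedV wr -> closedV s ->
  red (App (App (App (Val (loop_lam dispatch)) (loop_lam dispatch)) k) (cfg i n wl a wr s))
      (App (App (apps (Val dispatch) [i; n; wl; a; wr; s]) (loop_lam dispatch)) k) 4.
Proof. intros. unfold loop_lam. simpl apps. eval_to_target. Qed.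

Lemma dispatch_lam_spec brs p j i n wl a wr :
  Forall (fun v => closedV v) brs -> length brs = p -> j < p ->
  closedV (branches_lam brs) -> closedV i -> closedV n -> closedV wl -> closedV a -> closedV wr ->
  red (apps (Val (dispatch_lam (branches_lam brs))) [i; n; wl; a; wr; enc_char p j])
      (apps (Val (nth j brs id_lam)) [i; n; wl; a; wr; enc_char p j]) (p + 11).
Proof.
  intros Hf Hl Hj Hb Hi Hn Hwl Ha Hwr.
  assert (Hs : closedV (enc_char p j)) by (apply enc_char_closed; lia).
  eapply red_mono.
  { unfold dispatch_lam. simpl apps. do 6 beta_step.
    match goal with |- red _ _ ?b => change (red (apps (App (Val (branches_lam brs))
      (enc_char p j)) [i; n; wl; a; wr; enc_char p j]) (apps (Val (nth j brs id_lam))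
      [i; n; wl; a; wr; enc_char p j]) b) end.
    apply red_step_apps with (t' := substT 0 (enc_char p j) (apps (Val (Var 0)) brs));
      [apply step_beta |].
    rewrite substT_apps, map_substV_closed by auto. cbn [substT substV Nat.eqb].
    apply red_apps, enc_char_select; auto. }
  lia.
Qed.

(** * The simulating term *)

Lemma ord_lt m (j : 'I_m) : nat_of_ord j < m.
Proof. apply (ssrbool.elimT ssrnat.ltP), ltn_ord. Qed.

Lemma length_seq_size {A} (l : list A) : length l = seq.size l.
Proof. induction l; simpl; congruence. Qed.

Lemma nth_seq_nth {A} (l : list A) k x : List.nth k l x = seq.nth x l k.
Proof. revert k; induction l; intros [|k]; simpl; auto. Qed.

Lemma length_enum_ord m : @length 'I_m (enum 'I_m) = m.
Proof. rewrite length_seq_size. apply size_enum_ord. Qed.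

Lemma nth_enum_ord m (o : 'I_m) d : @List.nth 'I_m o (enum 'I_m) d = o.
Proof.
  rewrite nth_indep with (d' := o), nth_seq_nth by (rewrite length_enum_ord; apply ord_lt).
  apply nth_ord_enum.
Qed.

Section Translation.

Variable M : TM.

(* Undefined transitions get the junk entry [id_lam]; [tm_step] never selects it. *)
Definition entry (b : bI) (a : bW) (j : 'I_(tm_m M)) : value :=
  match tm_delta M b a j with
  | Some (d, a', mu, s') =>
      update_lam (pos_lam d) (move_lam mu) (enc_char 3 (bW_idx a')) (enc_char (tm_m M) s')
  | None => id_lam
  end.

Definition row (b : bI) (j : 'I_(tm_m M)) : value :=
  row_lam (entry b W0 j) (entry b W1 j) (entry b WB j).

Definition final_state (j : 'I_(tm_m M)) : bool :=
  Nat.eqb j (tm_T M) || Nat.eqb j (tm_F M).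

Definition branch (j : 'I_(tm_m M)) : value :=
  if final_state j then halt_lam else run_lam (row I0 j) (row I1 j) (row IL j) (row IR j).

Definition branches : list value := map branch (enum 'I_(tm_m M)).

Definition loop : value := loop_lam (dispatch_lam (branches_lam branches)).

Definition trans : term := App (Val loop) loop.

Lemma entry_closed b a j : closedV (entry b a j).
Proof.
  unfold entry. destruct (tm_delta M b a j) as [[[[d a'] mu] s'] |]; [| reflexivity].
  pose proof (ord_lt _ s').
  apply update_lam_closed; auto with closed; apply enc_char_closed; lia.
Qed.

Lemma branches_closed : Forall (fun v => closedV v) branches.
Proof.
  apply Forall_forall. intros x Hx. apply in_map_iff in Hx as [j [<- _]].
  unfold branch, row. destruct (final_state j); [reflexivity |].
  apply run_lam_closed; apply row_lam_closed; apply entry_closed.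
Qed.

Lemma branches_lam_closed : closedV (branches_lam branches).
Proof.
  unfold branches_lam. simpl. rewrite boundT_apps. simpl.
  apply forallb_forall. intros v Hv.
  apply boundV_closed. exact (proj1 (Forall_forall _ _) branches_closed v Hv).
Qed.

Lemma loop_closed : closedV loop.
Proof. pose proof branches_lam_closed. unfold loop, loop_lam, dispatch_lam. prove_closed. Qed.

Lemma trans_closed : closedT trans.
Proof. unfold closedT, trans. cbn [boundT]. rewrite loop_closed. reflexivity. Qed.

Lemma enc_config_cfg (C : config (tm_m M)) :
  enc_config C = cfg (enc_input (c_in C)) (enc_pos (c_pos C)) (enc_work (rev (c_wl C)))
    (enc_char 3 (bW_idx (c_a C))) (enc_work (c_wr C)) (enc_char (tm_m M) (c_st C)).
Proof. reflexivity. Qed.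

Lemma trans_dispatch k (C : config (tm_m M)) :
  red (App (App trans k) (enc_config C))
      (App (App (apps (Val (branch (c_st C))) [enc_input (c_in C); enc_pos (c_pos C);
          enc_work (rev (c_wl C)); enc_char 3 (bW_idx (c_a C)); enc_work (c_wr C);
          enc_char (tm_m M) (c_st C)]) loop) k)
      (tm_m M + 15).
Proof.
  pose proof (ord_lt _ (c_st C)).
  pose proof branches_lam_closed.
  assert (Hbr : branch (c_st C) = List.nth (c_st C) branches id_lam).
  { unfold branches. rewrite nth_indep with (d' := branch (c_st C)), map_nth, nth_enum_ord;
      [reflexivity |]. rewrite length_map, length_enum_ord. assumption. }
  rewrite enc_config_cfg, Hbr. unfold trans, loop.
  eapply red_mono.
  { eapply red_trans.
    - apply loop_lam_spec; auto with closed. unfold dispatch_lam. prove_closed.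
    - apply red_app, red_app, dispatch_lam_spec; auto using branches_closed with closed.
      unfold branches. rewrite length_map. apply length_enum_ord. }
  lia.
Qed.

Lemma trans_final k (C : config (tm_m M)) :
  is_final M C -> red (App (App trans k) (enc_config C)) (App (Val k) (enc_config C)) (tm_m M + 23).
Proof.
  intros Hf. pose proof (ord_lt _ (c_st C)).
  assert (Hb : branch (c_st C) = halt_lam).
  { unfold branch, final_state. destruct Hf as [-> | ->]; rewrite Nat.eqb_refl;
      [| rewrite Bool.orb_true_r]; reflexivity. }
  eapply red_mono.
  { eapply red_trans; [apply trans_dispatch |]. rewrite Hb.
    apply halt_lam_spec; auto using loop_closed with closed. }
  lia.
Qed.

Lemma trans_step k (C D : config (tm_m M)) :
  tm_wf M -> tm_step M C D ->
  red (App (App trans k) (enc_config C)) (App (App trans k) (enc_config D))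
      (tm_m M + 210 + 150 * c_pos C).
Proof.
  intros HM (b & d & a' & mu & s' & Hnth & Hdel & Hin & Hpos & Hmove & Hst).
  pose proof (ord_lt _ (c_st C)). pose proof (ord_lt _ s').
  pose proof (bin_length_bound (c_pos C)) as [_ Hbin].
  assert (Hb : branch (c_st C) = run_lam (row I0 (c_st C)) (row I1 (c_st C))
                                         (row IL (c_st C)) (row IR (c_st C))).
  { destruct (HM b (c_a C) (c_st C)) as [HT HF]; [rewrite Hdel; discriminate |].
    unfold branch, final_state.
    destruct (Nat.eqb_spec (c_st C) (tm_T M)) as [E | _]; [destruct (HT (ord_inj E)) |].
    destruct (Nat.eqb_spec (c_st C) (tm_F M)) as [E | _]; [destruct (HF (ord_inj E)) |].
    reflexivity. }
  eapply red_mono.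
  { eapply red_trans; [apply trans_dispatch |]. rewrite Hb.
    eapply red_trans.
    { apply red_app, red_app. simpl apps.
      apply (run_lam_spec (fun b a => entry b a (c_st C))); [intros; apply entry_closed | | exact Hnth].
      apply enc_char_closed. lia. }
    eapply red_trans.
    { apply red_app, red_app. unfold entry at 1. rewrite Hdel.
      apply update_lam_spec; auto with closed; [exact Hpos |].
      symmetry. exact Hmove. }
    eapply red_eq; [| apply resume_lam_spec; [apply loop_closed | unfold cfg; prove_closed]].
    unfold trans. rewrite enc_config_cfg, Hin, Hst. reflexivity. }
  nia.
Qed.

End Translation.

Lemma valid_input_length i : valid_input i -> 2 <= length i.
Proof. intros [s' [_ ->]]. simpl. rewrite length_app. simpl. lia. Qed.

Lemma log2R_ge_1 x : (2 <= x)%R -> (1 <= log2R x)%R.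
Proof.
  intros Hx. assert (Hl2 : (0 < ln 2)%R) by (rewrite <- ln_1; apply ln_increasing; lra).
  assert (ln 2 <= ln x)%R.
  { destruct (Rle_lt_or_eq_dec _ _ Hx) as [h | <-]; [left; apply ln_increasing |]; lra. }
  unfold log2R. apply (Rmult_le_reg_r (ln 2)); auto.
  unfold Rdiv. rewrite Rmult_assoc, Rinv_l; lra.
Qed.

Lemma red_loglinear t u b K L :
  2 <= L -> red t u b -> b <= K * L ->
  exists m, nsteps m t u /\ (INR m <= INR K * INR L * log2R (INR L))%R.
Proof.
  intros HL [m [Hm Hmb]] HbK. exists m. split; [exact Hm |].
  assert (Hlog : (1 <= log2R (INR L))%R).
  { apply log2R_ge_1. replace 2%R with (INR 2) by (simpl; lra). apply le_INR. lia. }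
  assert (HmK : (INR m <= INR K * INR L)%R) by (rewrite <- mult_INR; apply le_INR; lia).
  assert (0 <= INR K * INR L)%R by (apply Rmult_le_pos; apply pos_INR).
  apply Rle_trans with (INR K * INR L)%R; auto.
  rewrite <- (Rmult_1_r (INR K * INR L)) at 1. apply Rmult_le_compat_l; auto.
Qed.

Theorem mainTheorem8 (M : TM) (HM : tm_wf M) (Hin : tm_stays_in M) :
  exists trans : term, closedT trans /\
  exists c : R,
    forall (k : value) (C : config (tm_m M)),
      valid_input (c_in C) ->
      Nat.lt (c_pos C) (length (c_in C)) ->
      (is_final M C ->
         exists m : nat,
           nsteps m (App (App trans k) (enc_config C)) (App (Val k) (enc_config C)) /\
           (INR m <= c * INR (length (c_in C)) * log2R (INR (length (c_in C))))%R) /\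
      (forall D : config (tm_m M), tm_step M C D ->
         exists m : nat,
           nsteps m (App (App trans k) (enc_config C)) (App (App trans k) (enc_config D)) /\
           (INR m <= c * INR (length (c_in C)) * log2R (INR (length (c_in C))))%R).
Proof.
  exists (trans M). split; [apply trans_closed |].
  exists (INR (tm_m M + 360)). intros k C Hv Hpos.
  pose proof (valid_input_length _ Hv) as HL.
  split.
  - intros Hf. apply (red_loglinear _ _ _ _ _ HL (trans_final M k C Hf)). nia.
  - intros D Hstep. apply (red_loglinear _ _ _ _ _ HL (trans_step M k C D HM Hstep)). nia.
Qed.
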